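(* Let $I,J,K$ be a partition of $[m]$ and $\bm a\in\mathbb{R}^m$ with $\mathring{P}(\bm a,I,J,K)\neq\emptyset$. Then $\mathring{P}(\bm b,I,J,K)\neq\emptyset$ for every $\bm b$ in the same open face of $\delta\mathcal{A}_{\bm o}$ as $\bm a$.
   Context: Fix nonzero $\bm u_1,\dots,\bm u_m\in\mathbb{R}^n$ (repetitions and parallel vectors allowed), $U$ the $m\times n$ matrix with these rows; $U_I,\bm a_I$ denote rows/entries indexed by $I$. For a partition $I,J,K$ of $[m]$, $\mathring{P}(\bm a,I,J,K)=\{\bm x\in\mathbb{R}^n:U_I\bm x=\bm a_I,\ U_J\bm x<\bm a_J,\ U_K\bm x>\bm a_K\}$. A circuit is $C\subseteq[m]$ with $\{\bm u_i:i\in C\}$ a minimal linearly dependent indexed family; $\bm c^C$ satisfies $\sum c_i\bm u_i=\bm 0$, $c_i\ne0\iff i\in C$. The derived arrangement $\delta\mathcal{A}_{\bm o}$ consists of hyperplanes $\langle\bm c^C,\bm y\rangle=0$ in $\mathbb{R}^m$; $\bm a,\bm b$ lie in the same open face iff $\operatorname{sign}\langle\bm c^C,\bm a\rangle=\operatorname{sign}\langle\bm c^C,\bm b\rangle$ for all circuits $C$. *)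

From mathcomp Require Import all_boot all_order all_algebra.
From mathcomp Require Import reals.
Set Implicit Arguments. Unset Strict Implicit. Unset Printing Implicit Defensive.
Import Order.TTheory GRing.Theory Num.Theory.
Local Open Scope ring_scope.

(* The vectors u_1..u_m in R^n are the rows of U : 'M[R]_(m, n);
   points are column vectors x : 'cV[R]_n, so (U *m x) i 0 = <u_i, x>. *)

Definition inPring (R : realType) (m n : nat) (U : 'M[R]_(m, n)) (a : 'I_m -> R)
  (I J K : {set 'I_m}) (x : 'cV[R]_n) : Prop :=
  [/\ forall i, i \in I -> (U *m x) i 0 = a i,
      forall i, i \in J -> (U *m x) i 0 < a i &
      forall i, i \in K -> (U *m x) i 0 > a i].

Definition partition3 (m : nat) (I J K : {set 'I_m}) : Prop :=
  [/\ [disjoint I & J], [disjoint I & K], [disjoint J & K] &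
      I :|: J :|: K = [set: 'I_m]].

Definition lin_dep (R : realType) (m n : nat) (U : 'M[R]_(m, n)) (S : {set 'I_m}) : Prop :=
  exists c : 'I_m -> R,
    [/\ forall i, i \notin S -> c i = 0,
        exists i, c i != 0 &
        \sum_(i < m) c i *: row i U = 0].

Definition circuit (R : realType) (m n : nat) (U : 'M[R]_(m, n)) (C : {set 'I_m}) : Prop :=
  lin_dep U C /\ forall S : {set 'I_m}, S \proper C -> ~ lin_dep U S.

Definition circuit_vector (R : realType) (m n : nat) (U : 'M[R]_(m, n))
  (C : {set 'I_m}) (c : 'I_m -> R) : Prop :=
  (forall i, (c i != 0) = (i \in C)) /\ \sum_(i < m) c i *: row i U = 0.

(* a and b lie in the same open face of the derived arrangement:
   sign <c^C, a> = sign <c^C, b> for every circuit C (and every choice of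
   circuit vector c^C, which is unique up to a nonzero scalar). *)
Definition same_open_face (R : realType) (m n : nat) (U : 'M[R]_(m, n))
  (a b : 'I_m -> R) : Prop :=
  forall C c, circuit U C -> circuit_vector U C c ->
    Num.sg (\sum_(i < m) c i * a i) = Num.sg (\sum_(i < m) c i * b i).

(* P°(b, I, J, K) is nonempty iff the system with equations on I and strict
   inequalities of prescribed signs on J :|: K is solvable.  By a Motzkin-type
   transposition theorem this holds iff every linear dependence l among the u_i
   whose signs on J :|: K match the inequalities has <l, b> >= 0, strictly when
   l does not vanish on J :|: K.  Every linear dependence is a nonnegative
   combination of conformal ones with smaller support, hence eventually of
   circuit vectors; so the condition only involves the signs of the <c^C, b>,
   which are the same for a and for b. *)

From Stdlib Require Import Classical_Prop.
From mathcomp Require Import all_boot all_order all_algebra.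
From mathcomp Require Import reals ring lra.
Set Implicit Arguments. Unset Strict Implicit. Unset Printing Implicit Defensive.
Import Order.TTheory GRing.Theory Num.Theory.
Local Open Scope ring_scope.

Lemma submx_or_coker (F : fieldType) (p q : nat) (A : 'M[F]_(p, q)) (v : 'rV[F]_q) :
  (v <= A)%MS \/ exists2 d : 'cV[F]_q, A *m d = 0 & (v *m d) 0 0 != 0.
Proof.
rewrite submxE; case: eqP => [|/eqP vC]; first by left.
right; have [k vCk] : exists k, (v *m cokermx A) 0 k != 0.
  apply/existsP; apply: contraNT vC; rewrite negb_exists => /forallP vC0.
  by apply/eqP/rowP => k; rewrite [RHS]mxE; move/negPn/eqP: (vC0 k).
exists (col k (cokermx A)).
  apply/colP => i; have /matrixP/(_ i k) := mulmx_coker A.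
  rewrite !mxE => vcol; rewrite -[RHS]vcol.
  by apply: eq_bigr => j _; rewrite [col _ _ _ _]mxE.
suff -> : (v *m col k (cokermx A)) 0 0 = (v *m cokermx A) 0 k by [].
by rewrite [LHS]mxE [RHS]mxE; apply: eq_bigr => j _; rewrite [col _ _ _ _]mxE.
Qed.

Lemma sign_conformal (F : realDomainType) (s x y : F) :
  0 <= s * x -> x != 0 -> 0 <= x * y -> 0 <= s * y.
Proof.
move=> sx x0 xy; rewrite -(pmulr_lge0 _ (_ : 0 < x * x)); last first.
  by rewrite lt_def mulf_neq0 //= -expr2 sqr_ge0.
by rewrite mulrACA [y * x]mulrC mulr_ge0.
Qed.

Lemma small_pos_step (F : realFieldType) (T : finType) (P : pred T) (s h : T -> F) :
  (forall k, P k -> 0 < s k) -> exists2 t, 0 < t & forall k, P k -> 0 < s k + t * h k.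
Proof.
move=> s_gt0; pose S := \sum_(k | P k) `|h k| / s k.
have S_ge0 : 0 <= S by apply: sumr_ge0 => k Pk; rewrite divr_ge0 // ltW // s_gt0.
have S1_gt0 : 0 < 1 + S by rewrite ltr_pwDl.
exists (1 + S)^-1 => [|k Pk]; first by rewrite invr_gt0.
have sk := s_gt0 k Pk.
have : `|h k| / s k <= S.
  rewrite /S (bigD1 k) //= lerDl sumr_ge0 // => i /andP[Pi _].
  by rewrite divr_ge0 // ltW // s_gt0.
rewrite ler_pdivrMr // => hk; have hk' : - h k <= `|h k| by rewrite -normrN ler_norm.
rewrite -(pmulr_rgt0 _ S1_gt0) mulrDr mulrA mulfV ?gt_eqF // mul1r.
nra.
Qed.

Section LinearRelations.
Variables (R : realType) (m n : nat) (U : 'M[R]_(m, n)).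

Definition linrel (l : 'I_m -> R) := \sum_(i < m) l i *: row i U = 0.
Definition dotv (l v : 'I_m -> R) := \sum_(i < m) l i * v i.
Definition supp (l : 'I_m -> R) := [set i | l i != 0].

Lemma linrelZ s l : linrel l -> linrel (fun i => s * l i).
Proof.
rewrite /linrel => kl; under eq_bigr do rewrite -scalerA.
by rewrite -scaler_sumr kl scaler0.
Qed.

Lemma linrelB l1 l2 : linrel l1 -> linrel l2 -> linrel (fun i => l1 i - l2 i).
Proof.
rewrite /linrel => k1 k2; under eq_bigr do rewrite scalerBl.
by rewrite sumrB k1 k2 subrr.
Qed.

Lemma dotv_comb l al be mu1 mu2 b : (forall i, l i = al * mu1 i + be * mu2 i) ->
  dotv l b = al * dotv mu1 b + be * dotv mu2 b.
Proof.
move=> lE; rewrite /dotv !mulr_sumr -big_split /=.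
by apply: eq_bigr => i _; rewrite lE mulrDl !mulrA.
Qed.

Lemma dotv_image l (x : 'cV[R]_n) : linrel l -> dotv l (fun i => (U *m x) i 0) = 0.
Proof.
move=> kl; have kl_col k : \sum_i l i * U i k = 0.
  have /rowP/(_ k) := kl; rewrite summxE mxE => kl_k; rewrite -[RHS]kl_k.
  by apply: eq_bigr => i _; rewrite !mxE.
rewrite /dotv; under eq_bigr do rewrite mxE big_distrr /=.
rewrite exchange_big big1 //= => k _.
transitivity ((\sum_i l i * U i k) * x k 0); last by rewrite kl_col mul0r.
by rewrite mulr_suml; apply: eq_bigr => i _; rewrite mulrA.
Qed.

Lemma dotv_residual l b (x : 'cV[R]_n) : linrel l ->
  dotv l b = \sum_i l i * (b i - (U *m x) i 0).
Proof.
move=> kl; under [RHS]eq_bigr do rewrite mulrBr.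
by rewrite sumrB; have := dotv_image x kl; rewrite /dotv /= => ->; rewrite subr0.
Qed.

Lemma dotv_residual_ge0 (L : {set 'I_m}) l b (x : 'cV[R]_n) : linrel l ->
  (forall i, 0 <= l i * (b i - (U *m x) i 0)) ->
  (forall i, i \in L -> l i != 0 -> 0 < l i * (b i - (U *m x) i 0)) ->
  0 <= dotv l b /\ ((exists2 i, i \in L & l i != 0) -> 0 < dotv l b).
Proof.
move=> kl ge0 gt0; rewrite (dotv_residual b x kl); split; first exact: sumr_ge0.
case=> i iL li; rewrite (bigD1 i) //= ltr_pwDl ?gt0 //.
by apply: sumr_ge0.
Qed.

Definition restrict_rows (E : {set 'I_m}) : 'M[R]_(m, n) :=
  \matrix_(i, k) if i \in E then U i k else 0.

Lemma solvable_or_linrel (E : {set 'I_m}) b :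
  (exists y : 'cV[R]_n, forall i, i \in E -> (U *m y) i 0 = b i) \/
  (exists l, [/\ linrel l, forall i, i \notin E -> l i = 0 & dotv l b != 0]).
Proof.
pose bE : 'rV[R]_m := \row_i (if i \in E then b i else 0).
case: (submx_or_coker (restrict_rows E)^T bE) => [/submxP [D bED] | [d Ed0 bEd]].
  left; exists D^T => i iE; have /rowP/(_ i) := bED.
  by rewrite !mxE iE => ->; apply: eq_bigr => k _; rewrite !mxE iE mulrC.
right; exists (fun i => if i \in E then d i 0 else 0); split.
- apply/rowP => k; rewrite summxE [RHS]mxE; have /colP/(_ k) := Ed0.
  rewrite !mxE => Ed0k; rewrite -[RHS]Ed0k; apply: eq_bigr => i _; rewrite !mxE.
  by case: (i \in E); rewrite ?mul0r // mulrC.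
- by move=> i /negbTE ->.
- move: bEd; rewrite mxE /dotv; congr (_ != 0); apply: eq_bigr => i _; rewrite mxE.
  by case: (i \in E); rewrite ?mul0r ?mulr0 // mulrC.
Qed.

Lemma separating_dir_or_linrel (E : {set 'I_m}) j : j \notin E ->
  (exists l, [/\ linrel l, l j = 1 & forall i, i != j -> i \notin E -> l i = 0]) \/
  (exists d : 'cV[R]_n, (forall i, i \in E -> (U *m d) i 0 = 0) /\ (U *m d) j 0 != 0).
Proof.
move=> jE; case: (submx_or_coker (restrict_rows E) (row j U)) => [/submxP [D ujD] | [d Ed0 ujd]].
  pose mu i := if i \in E then D 0 i else 0.
  have ujE : row j U = \sum_i mu i *: row i U.
    rewrite ujD mulmx_sum_row; apply: eq_bigr => i _; rewrite /mu.
    case: ifP => iE; last by rewrite scale0r; apply/rowP => k; rewrite !mxE iE mulr0.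
    by congr (_ *: _); apply/rowP => k; rewrite !mxE iE.
  left; exists (fun i => (i == j)%:R - mu i); split.
  - rewrite /linrel; under eq_bigr do rewrite scalerBl.
    rewrite sumrB -ujE (bigD1 j) //= eqxx scale1r big1 ?addr0 ?subrr // => i /negbTE ->.
    by rewrite scale0r.
  - by rewrite eqxx /mu (negbTE jE) subr0.
  - by move=> i /negbTE -> iE; rewrite /mu (negbTE iE) subrr.
right; exists d; split; last by rewrite -row_mul mxE in ujd.
move=> i iE; have /colP/(_ i) := Ed0; rewrite !mxE => Ed0i; rewrite -[RHS]Ed0i.
by apply: eq_bigr => k _; rewrite !mxE iE.
Qed.

Definition conformal_part (l mu : 'I_m -> R) :=
  [/\ linrel mu, forall i, 0 <= l i * mu i & supp mu \proper supp l].

Lemma shift_conformal_part l c k : linrel l -> linrel c ->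
    {subset supp c <= supp l} -> c k != 0 ->
  (forall i, 0 <= l i / c i * (l i / c i - l k / c k)) ->
  conformal_part l (fun i => l i - l k / c k * c i).
Proof.
move=> kl kc cl ck conf; split.
- exact: linrelB kl (linrelZ _ kc).
- move=> i; case: (eqVneq (c i) 0) => [-> | ci].
    by rewrite mulr0 subr0 -expr2 sqr_ge0.
  rewrite (_ : _ * _ = l i / c i * (l i / c i - l k / c k) * c i ^+ 2).
    by rewrite mulr_ge0 ?sqr_ge0.
  by field; rewrite ck ci.
- have lk : k \in supp l by apply: cl; rewrite inE.
  apply/properP; split; last by exists k; rewrite // inE divfK ?subrr ?eqxx.
  apply/subsetP => i; rewrite !inE; apply: contraNneq => li.
  have : i \notin supp c by apply/negP => /cl; rewrite inE li eqxx.
  by rewrite inE negbK li => /eqP ->; rewrite mulr0 subrr.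
Qed.

Lemma conformal_split l c : linrel l -> linrel c -> supp c \proper supp l ->
    (exists i, c i != 0) ->
  exists al be mu1 mu2, [/\ 0 <= al, 0 <= be,
    (forall i, l i = al * mu1 i + be * mu2 i),
    conformal_part l mu1 & conformal_part l mu2].
Proof.
(* l lies between the two points where the line l - t c leaves the closed
   orthant of the sign pattern of l. *)
move=> kl; wlog [i0 ri0] : c / exists i, 0 < l i / c i.
  move=> wlog_pos kc cl [i0 ci0].
  have li0 : l i0 != 0 by move/properP: cl => [/subsetP/(_ i0)]; rewrite !inE => /(_ ci0).
  case: (ltrP 0 (l i0 / c i0)) => [ri0 | ri0].
    by apply: (wlog_pos c) => //; exists i0.
  have suppN : supp (fun i => -1 * c i) = supp c.
    by apply/setP => i; rewrite !inE mulN1r oppr_eq0.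
  apply: (wlog_pos (fun i => -1 * c i)); rewrite ?suppN //.
  - exists i0; rewrite mulN1r invrN mulrN oppr_gt0 lt_def ri0 andbT.
    by rewrite eq_sym mulf_neq0 ?invr_eq0.
  - exact: linrelZ.
  - by exists i0; rewrite mulN1r oppr_eq0.
move=> kc cl _; pose rho i := l i / c i.
have cl_sub : {subset supp c <= supp l} by apply/subsetP; case/properP: cl.
have rho_c i : rho i != 0 -> c i != 0.
  by rewrite /rho; apply: contraNneq => ->; rewrite invr0 mulr0.
case: (@arg_minP _ _ _ i0 [pred i | 0 < rho i] rho ri0) => k rk kmin; set tp := rho k.
have conf_tp : conformal_part l (fun i => l i - tp * c i).
  apply: shift_conformal_part => // [|i]; first by rewrite rho_c ?gt_eqF.
  case: (ltrP 0 (rho i)) => ri; first by rewrite mulr_ge0 ?subr_ge0 ?(ltW ri) ?kmin.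
  by rewrite mulr_le0 // subr_le0 (le_trans ri) ?ltW.
case: (boolP [exists i, rho i < 0]) => [/existsP [i1 ri1] | /existsPn rho_ge0].
  case: (@arg_maxP _ _ _ i1 [pred i | rho i < 0] rho ri1) => q rq qmax; set tm := rho q.
  have conf_tm : conformal_part l (fun i => l i - tm * c i).
    apply: shift_conformal_part => // [|i].
      by rewrite rho_c ?lt_eqF.
    case: (ltrP (rho i) 0) => ri.
      by rewrite mulr_le0 ?subr_le0 ?(ltW ri) //; apply: qmax.
    by rewrite mulr_ge0 // subr_ge0 (le_trans _ ri) ?ltW.
  have dpos : 0 < tp - tm by rewrite subr_gt0 (lt_trans rq).
  exists (tp / (tp - tm)), (- tm / (tp - tm)), (fun i => l i - tm * c i),
    (fun i => l i - tp * c i); split => //.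
  - by rewrite divr_ge0 ?ltW.
  - by rewrite divr_ge0 ?oppr_ge0 ?ltW.
  - by move=> i; field; rewrite gt_eqF.
exists 1, tp, (fun i => l i - tp * c i), c; split => //.
- exact: ltW.
- by move=> i; rewrite mul1r subrK.
- split=> // i; case: (eqVneq (c i) 0) => [-> | ci]; first by rewrite mulr0.
  rewrite (_ : _ * _ = rho i * c i ^+ 2); last by rewrite /rho; field.
  by rewrite mulr_ge0 ?sqr_ge0 // leNgt rho_ge0.
Qed.

Lemma linrel_conformal_ind (P : ('I_m -> R) -> Prop) :
  (forall l, (forall i, l i = 0) -> P l) ->
  (forall l, linrel l -> circuit U (supp l) -> P l) ->
  (forall l al be mu1 mu2, 0 <= al -> 0 <= be ->
     (forall i, l i = al * mu1 i + be * mu2 i) ->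
     conformal_part l mu1 -> conformal_part l mu2 -> P mu1 -> P mu2 -> P l) ->
  forall l, linrel l -> P l.
Proof.
move=> P0 Pcirc Pcomb l; have [N] := ubnP #|supp l|.
elim: N l => // N IH l /ltnSE suppN kl.
case: (eqVneq (supp l) set0) => [l0 | /set0Pn [i0 li0]].
  apply: P0 => i; have : i \notin supp l by rewrite l0 inE.
  by rewrite inE negbK => /eqP.
case: (classic (exists2 T : {set 'I_m}, T \proper supp l & lin_dep U T)) => [[T Tl dep] | indep].
  case: dep => c [cT [i1 ci1] kc].
  have csub : supp c \proper supp l.
    apply: sub_proper_trans Tl; apply/subsetP => i; rewrite inE.
    by apply: contraR => /cT ->.
  have [al [be [mu1 [mu2 [al0 be0 lE p1 p2]]]]] :=
    conformal_split kl kc csub (ex_intro _ i1 ci1).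
  apply: (Pcomb l al be mu1 mu2) => //.
    by case: p1 => kmu _ /proper_card lt; apply: IH; rewrite ?(leq_trans lt).
  by case: p2 => kmu _ /proper_card lt; apply: IH; rewrite ?(leq_trans lt).
apply: Pcirc => //; split=> [|S Sl dep]; last by apply: indep; exists S.
exists l; split=> //; last by exists i0; rewrite inE in li0.
by move=> i; rewrite inE negbK => /eqP.
Qed.

Variable sg : 'I_m -> R.
Hypothesis sg2 : forall i, sg i * sg i = 1.

Definition feasible (E L : {set 'I_m}) b (y : 'cV[R]_n) :=
  (forall i, i \in E -> (U *m y) i 0 = b i) /\
  (forall i, i \in L -> 0 < sg i * (b i - (U *m y) i 0)).

(* The dual side of Motzkin's transposition theorem for [feasible E L b]. *)
Definition motzkin_cond (E L : {set 'I_m}) b :=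
  forall l, linrel l -> (forall i, i \notin E -> i \notin L -> l i = 0) ->
    (forall i, i \in L -> 0 <= sg i * l i) ->
  0 <= dotv l b /\ ((exists2 i, i \in L & l i != 0) -> 0 < dotv l b).

Lemma mul_sgr (i : 'I_m) x y : x * y = (sg i * x) * (sg i * y).
Proof. by rewrite mulrACA sg2 mul1r. Qed.

Lemma mul_sg_ge0 i x y : 0 <= sg i * x -> 0 <= sg i * y -> 0 <= x * y.
Proof. by move=> hx hy; rewrite (mul_sgr i) mulr_ge0. Qed.

Lemma mul_sg_le0 i x y : sg i * x <= 0 -> sg i * y <= 0 -> 0 <= x * y.
Proof. by move=> hx hy; rewrite (mul_sgr i) mulr_le0. Qed.

Lemma sg_neq0 i : sg i != 0.
Proof. by apply/eqP => s0; have /eqP := sg2 i; rewrite s0 mul0r eq_sym oner_eq0. Qed.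

Lemma mul_sg_gt0 i x y : 0 <= sg i * x -> 0 < sg i * y -> x != 0 -> 0 < x * y.
Proof.
by move=> hx hy x0; rewrite (mul_sgr i) mulr_gt0 // lt_def hx mulf_neq0 ?sg_neq0.
Qed.

Lemma feasible_motzkin E L b x : feasible E L b x -> motzkin_cond E L b.
Proof.
move=> [xE xL] l kl lsupp lsg; apply: (@dotv_residual_ge0 L l b x kl) => [i | i iL li].
  case: (boolP (i \in E)) => iE; first by rewrite xE // subrr mulr0.
  case: (boolP (i \in L)) => iL; last by rewrite lsupp ?mul0r.
  by apply: (mul_sg_ge0 (lsg i iL)); rewrite ltW ?xL.
exact: mul_sg_gt0 (lsg i iL) (xL i iL) li.
Qed.

Lemma dotvZ s l b : dotv (fun i => s * l i) b = s * dotv l b.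
Proof. by rewrite /dotv mulr_sumr; apply: eq_bigr => i _; rewrite mulrA. Qed.

Lemma same_face_motzkin (E L : {set 'I_m}) a b (x : 'cV[R]_n) : (forall i, i \notin E -> i \in L) ->
  feasible E L a x -> same_open_face U a b -> motzkin_cond E L b.
Proof.
move=> cov /feasible_motzkin Ma face l kl _; move: l kl; apply: linrel_conformal_ind.
- move=> l l0 _; rewrite /dotv big1 => [|i _]; last by rewrite l0 mul0r.
  by split=> // -[i _]; rewrite l0 eqxx.
- move=> l kl circ lsg.
  have cv : circuit_vector U (supp l) l by split=> // i; rewrite inE.
  have sg_ab : Num.sg (dotv l a) = Num.sg (dotv l b) := face _ _ circ cv.
  have lsupp i : i \notin E -> i \notin L -> l i = 0 by move=> /cov ->.
  have [ge0 gt0] := Ma l kl lsupp lsg.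
  by split; [rewrite -sgr_ge0 -sg_ab sgr_ge0 | rewrite -sgr_gt0 -sg_ab sgr_gt0].
move=> l al be mu1 mu2 al0 be0 lE [_ c1 s1] [_ c2 s2] IH1 IH2 lsg.
have mu_sg mu : (forall i, 0 <= l i * mu i) -> supp mu \proper supp l ->
    forall i, i \in L -> 0 <= sg i * mu i.
  move=> cmu /properP[/subsetP smu _] i iL; case: (eqVneq (l i) 0) => li.
    have : i \notin supp mu by apply/negP => /smu; rewrite inE li eqxx.
    by rewrite inE negbK => /eqP ->; rewrite mulr0.
  exact: sign_conformal (lsg i iL) li (cmu i).
have [p1 q1] := IH1 (mu_sg _ c1 s1); have [p2 q2] := IH2 (mu_sg _ c2 s2).
rewrite (dotv_comb b lE); split; first by rewrite addr_ge0 ?mulr_ge0.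
case=> i iL; rewrite lE; case: (eqVneq (al * mu1 i) 0) => [-> | ].
  rewrite add0r mulf_eq0 negb_or => /andP[be_ne mu2_ne].
  have be_gt0 : 0 < be by rewrite lt_def be_ne be0.
  have := mulr_gt0 be_gt0 (q2 (ex_intro2 _ _ i iL mu2_ne)).
  by have := mulr_ge0 al0 p1; lra.
rewrite mulf_eq0 negb_or => /andP[al_ne mu1_ne] _.
have al_gt0 : 0 < al by rewrite lt_def al_ne al0.
have := mulr_gt0 al_gt0 (q1 (ex_intro2 _ _ i iL mu1_ne)).
by have := mulr_ge0 be0 p2; lra.
Qed.

Lemma motzkin_base (E : {set 'I_m}) b :
  motzkin_cond E set0 b -> exists y, feasible E set0 b y.
Proof.
move=> M; case: (solvable_or_linrel E b) => [[y yE] | [l [kl lE lb]]].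
  by exists y; split=> // i; rewrite inE.
have no_sign l' i : i \in set0 -> 0 <= sg i * l' i by rewrite inE.
have [ge0 _] := M l kl (fun i iE _ => lE i iE) (no_sign l).
have suppN i : i \notin E -> i \notin set0 -> -1 * l i = 0.
  by move=> iE _; rewrite lE ?mulr0.
have [le0 _] := M _ (linrelZ (-1) kl) suppN (no_sign _).
by move: le0 lb; rewrite dotvZ mulN1r oppr_ge0 => le0; rewrite eq_le ge0 le0.
Qed.

Lemma motzkin_setD1 (E L : {set 'I_m}) b j :
  j \notin E -> motzkin_cond E L b -> motzkin_cond E (L :\ j) b.
Proof.
move=> jE M l kl lsupp lsg; have lj : l j = 0 by rewrite lsupp // !inE eqxx.
have lsupp' i : i \notin E -> i \notin L -> l i = 0.
  by move=> iE iL; rewrite lsupp // !inE negb_and iL orbT.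
have lsg' i : i \in L -> 0 <= sg i * l i.
  by case: (eqVneq i j) => [-> | ij] iL; rewrite ?lj ?mulr0 // lsg // !inE ij.
have [ge0 gt0] := M l kl lsupp' lsg'.
by split=> // -[i]; rewrite !inE => /andP[_ iL] li; apply: gt0; exists i.
Qed.

Lemma motzkin_promote (E L : {set 'I_m}) b j (x : 'cV[R]_n) :
    j \in L -> j \notin E -> motzkin_cond E L b -> feasible E (L :\ j) b x ->
    sg j * (b j - (U *m x) j 0) <= 0 ->
  motzkin_cond (j |: E) (L :\ j) b.
Proof.
move=> jL jE M [xE xL] xj l kl lsupp lsg.
case: (lerP 0 (sg j * l j)) => lj.
  have lsupp' i : i \notin E -> i \notin L -> l i = 0.
    move=> iE iL; have ij : i != j by apply: contraNneq iL => ->.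
    by rewrite lsupp // !inE ?negb_or ?negb_and ?ij ?iE ?iL.
  have lsg' i : i \in L -> 0 <= sg i * l i.
    by case: (eqVneq i j) => [-> | ij] iL //; rewrite lsg // !inE ij.
  have [ge0 gt0] := M l kl lsupp' lsg'.
  by split=> // -[i]; rewrite !inE => /andP[_ iL] li; apply: gt0; exists i.
apply: (@dotv_residual_ge0 (L :\ j) l b x kl) => [i | i iL li].
  case: (boolP (i \in E)) => iE; first by rewrite xE // subrr mulr0.
  case: (eqVneq i j) => [-> | ij]; first exact: mul_sg_le0 (ltW lj) xj.
  case: (boolP (i \in L :\ j)) => iL; first by rewrite (mul_sg_ge0 (lsg i iL)) ?ltW ?xL.
  by rewrite lsupp ?mul0r // !inE negb_or ij.
exact: mul_sg_gt0 (lsg i iL) (xL i iL) li.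
Qed.

Lemma motzkin_separating_dir (E L : {set 'I_m}) b j (z : 'cV[R]_n) :
    j \in L -> [disjoint E & L] -> motzkin_cond E L b ->
    (forall i, i \in j |: E -> (U *m z) i 0 = b i) ->
  exists d : 'cV[R]_n, (forall i, i \in E -> (U *m d) i 0 = 0) /\ (U *m d) j 0 != 0.
Proof.
move=> jL dEL M zE; have jE : j \notin E by rewrite (disjointFl dEL jL).
case: (separating_dir_or_linrel jE) => // -[l [kl lj lsupp]]; exfalso.
have lsupp' i : i \notin E -> i \notin L -> sg j * l i = 0.
  by move=> iE iL; rewrite lsupp ?mulr0 //; apply: contraNneq iL => ->.
have lsg i : i \in L -> 0 <= sg i * (sg j * l i).
  case: (eqVneq i j) => [-> | ij] iL; first by rewrite lj mulr1 sg2.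
  by rewrite lsupp ?mulr0 ?(disjointFl dEL iL).
have [_ gt0] := M _ (linrelZ (sg j) kl) lsupp' lsg.
have lam_j : sg j * l j != 0 by rewrite lj mulr1 sg_neq0.
have := gt0 (ex_intro2 _ _ j jL lam_j).
rewrite (dotv_residual b z (linrelZ _ kl)) big1 ?ltxx // => i _.
case: (boolP (i \in j |: E)) => ijE; first by rewrite zE // subrr mulr0.
by move: ijE; rewrite !inE negb_or => /andP[ij iE]; rewrite lsupp // mulr0 mul0r.
Qed.

Lemma feasible_perturb (E L : {set 'I_m}) b j (z d : 'cV[R]_n) :
    j \in L -> feasible (j |: E) (L :\ j) b z ->
    (forall i, i \in E -> (U *m d) i 0 = 0) -> (U *m d) j 0 != 0 ->
  exists w, feasible E L b w.
Proof.
move=> jL [zE zL] dE dj; set ud := (U *m d) j 0.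
have [t t_gt0 tL] := small_pos_step (fun i => sg i * sg j * ud * (U *m d) i 0) zL.
exists (z - (t * sg j * ud) *: d).
have Uw i : (U *m (z - (t * sg j * ud) *: d)) i 0
    = (U *m z) i 0 - t * sg j * ud * (U *m d) i 0.
  by rewrite mulmxBr -scalemxAr !mxE.
split=> i; rewrite Uw.
  by move=> iE; rewrite dE // mulr0 subr0 zE // !inE iE orbT.
move=> iL; case: (eqVneq i j) => [-> | ij].
  rewrite zE ?setU11 // -/ud.
  rewrite (_ : sg j * _ = t * ud ^+ 2 * (sg j * sg j)); last by ring.
  by rewrite sg2 mulr1 mulr_gt0 // lt_def sqr_ge0 expf_neq0.
rewrite (_ : sg i * _ = sg i * (b i - (U *m z) i 0)
                     + t * (sg i * sg j * ud * (U *m d) i 0)); last by ring.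
by apply: tL; rewrite !inE ij.
Qed.

Lemma motzkin_feasible (E L : {set 'I_m}) b :
  [disjoint E & L] -> motzkin_cond E L b -> exists y, feasible E L b y.
Proof.
have [N] := ubnP #|L|; elim: N E L => // N IH E L /ltnSE LN dEL M.
case: (set_0Vmem L) => [L0 | [j jL]]; first by move: M; rewrite L0; exact: motzkin_base.
have jE : j \notin E by rewrite (disjointFl dEL jL).
have LjN : (#|L :\ j| < N)%N by move: LN; rewrite (cardsD1 j L) jL.
have dEL' : [disjoint E & L :\ j] by apply: disjointWr dEL; apply: subsetDl.
have dEL'' : [disjoint j |: E & L :\ j].
  by rewrite disjoints_subset subUset -!disjoints_subset disjoints1 dEL' !inE eqxx.
(* Drop the constraint j; if it fails, impose it as an equation instead and
   then move off that hyperplane along a direction that fixes E. *)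
have [x xfeas] := IH E (L :\ j) LjN dEL' (motzkin_setD1 jE M).
case: (ltrP 0 (sg j * (b j - (U *m x) j 0))) => xj.
  exists x; case: xfeas => xE xL; split=> // i iL.
  by case: (eqVneq i j) => [-> // | ij]; apply: xL; rewrite !inE ij.
have [z zfeas] := IH (j |: E) (L :\ j) LjN dEL'' (motzkin_promote jL jE M xfeas xj).
have [d [dE dj]] := motzkin_separating_dir jL dEL M zfeas.1.
exact: feasible_perturb jL zfeas dE dj.
Qed.

End LinearRelations.

Unset Implicit Arguments.

Theorem mainTheorem6 (R : realType) (m n : nat) (U : 'M[R]_(m, n))
  (Hnz : forall i : 'I_m, row i U != 0)
  (I J K : {set 'I_m}) (Hpart : partition3 I J K)
  (a : 'I_m -> R) (Ha : exists x : 'cV[R]_n, inPring U a I J K x) :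
  forall b : 'I_m -> R, same_open_face U a b ->
    exists y : 'cV[R]_n, inPring U b I J K y.
Proof.
move=> b face; case: Hpart => dIJ dIK dJK cover; case: Ha => x [xI xJ xK].
pose sg i : R := if i \in K then -1 else 1.
have sg2 i : sg i * sg i = 1 by rewrite /sg; case: ifP; rewrite ?mulN1r ?opprK ?mulr1.
have sgJ i : i \in J -> sg i = 1 by rewrite /sg => /(disjointFr dJK) ->.
have sgK i : i \in K -> sg i = -1 by rewrite /sg => ->.
have cov i : i \notin I -> i \in J :|: K.
  move=> iI; have : i \in I :|: J :|: K by rewrite cover inE.
  by rewrite !inE (negbTE iI).
have feas_a : feasible U sg I (J :|: K) a x.
  split=> // i; rewrite inE => /orP[iJ | iK].
    by rewrite sgJ // mul1r subr_gt0 xJ.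
  by rewrite sgK // mulN1r oppr_gt0 subr_lt0 xK.
have dIJK : [disjoint I & J :|: K].
  by rewrite -setI_eq0 setIUr setU_eq0 !setI_eq0 dIJ dIK.
have [y [yI yJK]] := motzkin_feasible sg2 dIJK (same_face_motzkin sg2 cov feas_a face).
exists y; split=> // i iX; move: (yJK i); rewrite inE iX ?orbT.
  by rewrite sgJ // mul1r subr_gt0; apply.
by rewrite sgK // mulN1r oppr_gt0 subr_lt0; apply.
Qed.
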